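(* Let $\Gamma$ be a finite connected tetravalent $G$-half-arc-transitive graph for some $G\le\mathrm{Aut}(\Gamma)$ having at least three $G$-alternating cycles, and let $r=\mathrm{rad}_G(\Gamma)$, $a=\mathrm{att}_G(\Gamma)$. Then the graph $\mathrm{Alt}_G(\Gamma)$ is regular of valence $2r/a$, and the induced action of $G$ on $\mathrm{Alt}_G(\Gamma)$ is vertex- and edge-transitive. Moreover, this action is arc-transitive if and only if $a$ does not divide $r$.
   Context: All graphs are finite and simple. For a tetravalent graph $\Gamma$ and $G\le \mathrm{Aut}(\Gamma)$, $\Gamma$ is $G$-half-arc-transitive if $G$ acts transitively on vertices and edges but not on arcs. Then the $G$-orbits on arcs give two paired orientations of the edges, and for each, every vertex is the tail of two and the head of two incident edges. A $G$-alternating cycle is a cycle in which every two consecutive edges have a common head or a common tail. All $G$-alternating cycles have the same length $2\,\mathrm{rad}_G(\Gamma)$, and any two $G$-alternating cycles sharing a vertex meet in the same number $\mathrm{att}_G(\Gamma)$ of vertices; it is known that $\mathrm{att}_G(\Gamma)$ divides $2\,\mathrm{rad}_G(\Gamma)$. The graph of $G$-alternating cycles $\mathrm{Alt}_G(\Gamma)$ has the $G$-alternating cycles of $\Gamma$ as vertices, two being adjacent whenever they have at least one vertex in common; $G$ acts on it naturally. *)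

From mathcomp Require Import all_boot all_order all_fingroup.
Set Implicit Arguments. Unset Strict Implicit. Unset Printing Implicit Defensive.

(* Simple graphs: vertex type V : finType, adjacency e : rel V (assumed
   symmetric and irreflexive in the theorem). Subgroups of Aut are
   G : {group {perm V}} whose elements preserve e. *)

Section AltCycles.
Variables (V : finType) (e : rel V) (G : {group {perm V}}).

Definition graph_auts : Prop :=
  forall g, g \in G -> forall x y, e (g x) (g y) = e x y.

Definition half_arc_transitive : Prop :=
  [/\ graph_auts,
      (forall x y, exists2 g, g \in G & g x = y),
      (forall x y u v, e x y -> e u v ->
          exists2 g, g \in G & [set g x; g y] = [set u; v]) &
      ~ (forall x y u v, e x y -> e u v ->
          exists2 g, g \in G & (g x = u /\ g y = v))].

(* (u,v) lies in the G-orbit of the arc (x,y): one of the G-orientations *)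
Definition in_orient (x y u v : V) : bool :=
  [exists g in G, (g x == u) && (g y == v)].

(* s lists the vertices of a cycle (in cyclic order) in which any two
   consecutive edges have a common head or a common tail w.r.t. the
   orientation given by the G-orbit of the arc (x,y). *)
Definition alt_seq (x y : V) (s : seq V) : bool :=
  [&& uniq s, 2 < size s, path.cycle e s &
      all (fun v => let p := prev s v in let n := next s v in
             (in_orient x y p v && in_orient x y n v) ||
             (in_orient x y v p && in_orient x y v n)) s].

Definition cyc_edges (s : seq V) : {set {set V}} :=
  [set [set v; next s v] | v in s].

(* C (an edge set) is a G-alternating cycle, for one of the G-orientations.
   (A duplicate-free sequence has length <= #|V|, so the bounded tuple
   quantification is no restriction.) *)
Definition is_alt_cycle (C : {set {set V}}) : bool :=
  [exists x, [exists y, e x y &&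
     [exists k : 'I_#|V|.+1, [exists t : k.-tuple V,
        alt_seq x y t && (cyc_edges t == C)]]]].

Definition alt_cycles : {set {set {set V}}} := [set C | is_alt_cycle C].

Definition cverts (C : {set {set V}}) : {set V} := \bigcup_(f in C) f.

Definition alt_adj (C D : {set {set V}}) : bool :=
  (C != D) && (cverts C :&: cverts D != set0).

(* rad_G: half the length of (any, here a chosen) G-alternating cycle *)
Definition radG : nat :=
  if [pick C in alt_cycles] is Some C then #|C| %/ 2 else 0.

(* att_G: size of the intersection of (any, here a chosen) two distinct
   G-alternating cycles sharing a vertex *)
Definition attG : nat :=
  if [pick p : {set {set V}} * {set {set V}} |
        [&& p.1 \in alt_cycles, p.2 \in alt_cycles & alt_adj p.1 p.2]]
  is Some p then #|cverts p.1 :&: cverts p.2| else 0.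

Definition act_cyc (g : {perm V}) (C : {set {set V}}) : {set {set V}} :=
  [set [set g v | v in f] | f : {set V} in C].

End AltCycles.

From mathcomp Require Import all_boot all_order all_fingroup.
From mathcomp Require Import zify.
Set Implicit Arguments. Unset Strict Implicit. Unset Printing Implicit Defensive.

(* Fix the G-orientation containing an arc (x0, y0). Since G is not arc-transitive,
   every vertex has out- and in-degree 2, so an alternating walk is determined by
   its first edge. Hence a vertex lies on exactly two alternating cycles, being a
   tail of one and a head of the other; this, with the transitivity of G on
   vertices, gives transitivity on alternating cycles and on their adjacencies, and
   counting for each vertex of a cycle C the other cycle through it gives valence
   |C| / a = 2r / a.
   Number the vertices of C as w_0, w_1, ... from a tail w_0, and let D be the
   other cycle through w_0. An element of G rotating C by two steps, and one
   reflecting C about a head w_c with w_c in D, show that w_i lies on D exactly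
   when q divides i, for some q dividing 2r; so a = 2r / q. An element swapping
   C and D must map w_0 to a head of C lying on D, i.e. to an odd multiple of q;
   conversely, if q is odd, mapping w_0 to w_q swaps C and D. Finally q is odd
   exactly when a does not divide r. *)

Lemma eq_set2_cases (T : finType) (a b c d : T) :
  [set a; b] = [set c; d] -> (a = c /\ b = d) \/ (a = d /\ b = c).
Proof.
move=> E.
have : a \in [set c; d] by rewrite -E set21.
have : b \in [set c; d] by rewrite -E set22.
have : c \in [set a; b] by rewrite E set21.
have : d \in [set a; b] by rewrite E set22.
rewrite !inE => /orP[]/eqP-> /orP[]/eqP-> /orP[]/eqP ha /orP[]/eqP hb; subst; auto.
Qed.

Lemma card2_set2 (T : finType) (X : {set T}) a b :
  #|X| = 2 -> a \in X -> b \in X -> a != b -> X = [set a; b].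
Proof.
move=> X2 aX bX ab; apply/eqP; rewrite eq_sym eqEcard X2 cards2 ab leqnn andbT.
by apply/subsetP=> z; rewrite !inE => /orP[]/eqP->.
Qed.

Lemma card2_other (T : finType) (X : {set T}) a b c :
  #|X| = 2 -> a \in X -> b \in X -> c \in X -> b != a -> c != a -> b = c.
Proof.
move=> X2 aX bX cX ba ca; rewrite eq_sym in ba.
by move: cX; rewrite (card2_set2 X2 aX bX ba) !inE (negbTE ca) => /eqP.
Qed.

Lemma prev_neq_next (T : finType) (s : seq T) x :
  uniq s -> 2 < size s -> x \in s -> prev s x != next s x.
Proof.
move=> us s2 xs; apply/eqP=> pn.
have x2 : iter 2 (next s) x = x by rewrite /= -pn next_prev.
have := @findex_iter _ (next s) x 2; rewrite (order_cycle (cycle_next us)) // x2 findex0.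
by move/(_ s2).
Qed.

Lemma iter_fix_period (T : eqType) (F : T -> T) x m :
  0 < m -> iter m F x = x -> exists2 d, 0 < d & forall k, (iter k F x == x) = (d %| k).
Proof.
move=> m0 xm.
have ex : exists k, (0 < k) && (iter k F x == x) by exists m; rewrite m0 xm eqxx.
case: (ex_minnP ex) => d /andP[d0 /eqP xd] dmin; exists d => // k.
have xqd q : iter (q * d) F x = x by elim: q => // q IH; rewrite mulSn iterD IH xd.
rewrite {1}(divn_eq k d) addnC iterD xqd /dvdn.
case: posnP => [->|r0]; first exact: eqxx.
apply/negbTE/negP => r_fix.
by have := dmin _ (introT andP (conj r0 r_fix)); rewrite leqNgt ltn_pmod.
Qed.

Section CycleSeq.
Variables (T : finType) (s : seq T).
Hypothesis s_uniq : uniq s.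

Lemma mem_iter_next i x : x \in s -> iter i (next s) x \in s.
Proof. by move=> xs; elim: i => //= i IH; rewrite mem_next. Qed.

Lemma mem_iter_prev i x : x \in s -> iter i (prev s) x \in s.
Proof. by move=> xs; elim: i => //= i IH; rewrite mem_prev. Qed.

Lemma iter_prev_next i x : iter i (prev s) (iter i (next s) x) = x.
Proof. by elim: i x => // i IH x; rewrite iterSr iterS prev_next ?IH. Qed.

Lemma iter_next_size x : x \in s -> iter (size s) (next s) x = x.
Proof.
move=> xs; have cyc := cycle_next s_uniq.
by rewrite -(order_cycle cyc s_uniq xs) (iter_order_cycle cyc xs xs).
Qed.

Lemma iter_next_onto x y : x \in s -> y \in s ->
  exists2 k, k < size s & y = iter k (next s) x.
Proof.
move=> xs ys; have cyc := cycle_next s_uniq.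
have xy : fconnect (next s) x y by rewrite (fconnect_cycle cyc xs).
exists (findex (next s) x y); last by rewrite iter_findex.
by rewrite -(order_cycle cyc s_uniq xs) findex_max.
Qed.

Lemma iter_next_inj x i j : x \in s -> i < size s -> j < size s ->
  iter i (next s) x = iter j (next s) x -> i = j.
Proof.
move=> xs; rewrite -(order_cycle (cycle_next s_uniq) s_uniq xs) => ilt jlt ij.
by rewrite -(findex_iter ilt) ij findex_iter.
Qed.

Lemma cverts_cyc_edges : cverts (cyc_edges s) = [set x in s].
Proof.
apply/setP=> z; rewrite inE; apply/bigcupP/idP.
  by case=> f /imsetP[v vs ->]; rewrite !inE => /orP[]/eqP->; rewrite ?mem_next.
by move=> zs; exists [set z; next s z]; [apply: imset_f | rewrite set21].
Qed.

Lemma card_cyc_edges : 2 < size s -> #|cyc_edges s| = size s.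
Proof.
move=> s2; rewrite card_in_imset; first exact/card_uniqP.
move=> v w vs ws /eq_set2_cases[[]//|[vw wv]].
have := prev_neq_next s_uniq s2 ws.
by rewrite -[in prev s w]wv prev_next // vw eqxx.
Qed.

Lemma cyc_edges_map (g : {perm T}) : cyc_edges (map g s) = act_cyc g (cyc_edges s).
Proof.
apply/setP=> f; apply/imsetP/imsetP.
  case=> w /mapP[v vs ->] ->; exists [set v; next s v]; first exact: imset_f.
  by rewrite imsetU1 imset_set1 next_map //; exact: perm_inj.
case=> f' /imsetP[v vs ->] ->; exists (g v); first exact: map_f.
by rewrite imsetU1 imset_set1 next_map //; exact: perm_inj.
Qed.

End CycleSeq.

Section ActCyc.
Variable T : finType.
Implicit Types (g h : {perm T}) (C : {set {set T}}).

Lemma act_cyc1 C : act_cyc 1%g C = C.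
Proof.
rewrite /act_cyc -[RHS]imset_id; apply: eq_imset => f.
by rewrite -[RHS]imset_id; apply: eq_imset => v; rewrite perm1.
Qed.

Lemma act_cycM g h C : act_cyc (g * h)%g C = act_cyc h (act_cyc g C).
Proof.
rewrite /act_cyc -imset_comp; apply: eq_imset => f /=.
by rewrite -imset_comp; apply: eq_imset => v /=; rewrite permM.
Qed.

Lemma act_cyc_inj g : injective (act_cyc g).
Proof. by apply: imset_inj; apply: imset_inj; exact: perm_inj. Qed.

Lemma act_cycK g C D : act_cyc g C = D -> act_cyc g^-1 D = C.
Proof. by move=> <-; rewrite -act_cycM mulgV act_cyc1. Qed.

Lemma card_act_cyc g C : #|act_cyc g C| = #|C|.
Proof. by rewrite card_imset //; apply: imset_inj; exact: perm_inj. Qed.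

Lemma cverts_act_cyc g C : cverts (act_cyc g C) = g @: cverts C.
Proof.
apply/setP=> z; apply/bigcupP/imsetP.
  case=> f /imsetP[f' f'C ->] /imsetP[v vf ->]; exists v => //.
  by apply/bigcupP; exists f'.
by case=> v /bigcupP[f fC vf] ->; exists (g @: f); apply: imset_f.
Qed.

Lemma alt_adj_act g C D : alt_adj (act_cyc g C) (act_cyc g D) = alt_adj C D.
Proof.
rewrite /alt_adj (inj_eq (act_cyc_inj (g := g))) !cverts_act_cyc -imsetI ?imset_eq0 //.
by move=> u v _ _; apply: perm_inj.
Qed.

Lemma alt_adj_sym C D : alt_adj C D = alt_adj D C.
Proof. by rewrite /alt_adj eq_sym setIC. Qed.

End ActCyc.

Lemma dvdn_divn_half n q : 0 < n -> ~~ odd n -> q %| n ->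
  (n %/ q %| n %/ 2) = ~~ odd q.
Proof.
move=> n0 en /dvdnP[m def_n]; subst n.
have q0 : 0 < q by move: n0; rewrite muln_gt0 => /andP[].
rewrite mulnK //; case oq: (odd q) => /=.
- have [m' def_m] : exists m', m = m' * 2.
    by exists m./2; rewrite muln2 even_halfK //; move: en; rewrite oddM oq andbT.
  subst m; have m'0 : 0 < m' by move: n0; rewrite !muln_gt0 => /andP[/andP[]].
  by rewrite mulnAC mulnK // dvdn_pmul2l // dvdn2 oq.
- have [q' ->] : exists q', q = q' * 2 by exists q./2; rewrite muln2 even_halfK ?oq.
  by rewrite mulnA mulnK // dvdn_mulr.
Qed.

Lemma card_multiples n q : 0 < q -> q %| n -> #|[set i : 'I_n | q %| i]| = n %/ q.
Proof.
move=> q0 /dvdnP[m ->]; rewrite mulnK //.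
rewrite -sum1_card big_mkcond /=.
under eq_bigr do rewrite inE.
elim: m => [|m IH]; first by rewrite big_ord0.
rewrite mulSnr big_split_ord /= IH -[m.+1]addn1; congr (_ + _).
case: q q0 {IH} => // q _.
rewrite big_ord_recl /= addn0 dvdn_mull // big1 // => i _.
rewrite /bump /= add1n dvdn_addr ?dvdn_mull //.
by case: ifP => // /(dvdn_leq (ltn0Sn _)); rewrite ltnS leqNgt ltn_ord.
Qed.

Section ShiftReflect.
Variables (T : eqType) (f : nat -> T) (F : T -> T) (n : nat).
Hypotheses (n_gt0 : 0 < n) (n_even : ~~ odd n).
Hypothesis f_periodic : forall i, f (i + n) = f i.
Hypothesis f_shift2 : forall i, f i.+2 = F (f i).
Hypothesis f_reflect : forall c, odd c -> f c = f 0 -> f (c + c) = f 0.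

Let f_add_double b j : f (b + 2 * j) = iter j F (f b).
Proof. by elim: j => [|j IH]; rewrite ?addn0 // mulnS addnCA addnC addn2 f_shift2 IH. Qed.

Let f_add_mul i k : f (i + k * n) = f i.
Proof. by elim: k => [|k IH]; rewrite ?addn0 // mulSn addnCA addnC f_periodic IH. Qed.

Lemma eq_f0_multiples : exists2 q, 0 < q & q %| n /\ forall i, (f i == f 0) = (q %| i).
Proof.
have def_n : n = 2 * n./2 by rewrite mul2n even_halfK.
have half_gt0 : 0 < n./2 by move: n_gt0; rewrite {1}def_n muln_gt0.
have fix_half : iter n./2 F (f 0) = f 0 by rewrite -f_add_double -def_n -[n]add0n f_periodic.
have [d d_gt0 fix_d] := iter_fix_period half_gt0 fix_half.
have d_half : d %| n./2 by rewrite -fix_d fix_half.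
have f_even j : (f (2 * j) == f 0) = (d %| j) by rewrite -fix_d -f_add_double add0n.
have i_half i : ~~ odd i -> i = 2 * i./2 by move=> ei; rewrite mul2n even_halfK.
case: (boolP (has (fun c => odd c && (f c == f 0)) (iota 0 n))).
- case/hasP=> c _ /andP[oc /eqP fc].
  have d_c : d %| c by rewrite -f_even mul2n -addnn f_reflect.
  have od : odd d by apply: contraTT oc; rewrite -!dvdn2 => /dvdn_trans; apply.
  have d_n : d %| n by rewrite def_n dvdn_mull.
  have d_double j : (d %| 2 * j) = (d %| j) by rewrite Gauss_dvdr // coprimen2.
  exists d => //; split => // i; case oi: (odd i); last first.
    by rewrite (i_half i (negbT oi)) f_even d_double.
  have c_le : c <= i + c * n by rewrite (leq_trans (leq_pmulr c n_gt0)) ?leq_addl.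
  have e_ic : ~~ odd (i + c * n - c) by rewrite oddB // oddD oddM oi oc (negbTE n_even).
  have def_ic : i + c * n = c + 2 * (i + c * n - c)./2 by rewrite -i_half // subnKC.
  rewrite -(f_add_mul i c) def_ic f_add_double fc -[f 0]/(f (0 + 0)) -f_add_double.
  rewrite !add0n f_even -d_double -(dvdn_addr _ d_c) -def_ic dvdn_addl //.
  exact: dvdn_mull.
- move/hasPn=> no_odd; exists (2 * d); first by rewrite muln_gt0.
  split=> [|i]; first by rewrite def_n dvdn_pmul2l.
  case oi: (odd i); last by rewrite (i_half i (negbT oi)) f_even dvdn_pmul2l.
  have : i %% n \in iota 0 n by rewrite mem_iota add0n ltn_pmod.
  move/no_odd; rewrite odd_mod ?(negbTE n_even) // oi /= => /negbTE.
  rewrite {2}(divn_eq i n) addnC f_add_mul => ->.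
  by apply/esym/negbTE; apply: contraTN oi => /(dvdn_trans (dvdn_mulr d (dvdnn 2))); rewrite dvdn2.
Qed.

End ShiftReflect.

Section HalfArcTransitive.
Variables (V : finType) (e : rel V) (G : {group {perm V}}).
Hypotheses (e_sym : symmetric e) (deg4 : forall x, #|[set y | e x y]| = 4).
Hypothesis hatG : half_arc_transitive e G.
Variables (x0 y0 : V).
Hypothesis e_x0y0 : e x0 y0.

Local Notation arc := (in_orient G x0 y0).

Lemma autsG : graph_auts e G. Proof. by case: hatG. Qed.

Lemma vtransG x y : exists2 g, g \in G & g x = y. Proof. by case: hatG. Qed.

Lemma etransG x y u v : e x y -> e u v ->
  exists2 g, g \in G & [set g x; g y] = [set u; v].
Proof. by case: hatG => _ _ + _; apply. Qed.

Lemma in_orient_act x y g u v : g \in G ->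
  in_orient G x y (g u) (g v) = in_orient G x y u v.
Proof.
move=> gG; apply/existsP/existsP => -[h /andP[hG /andP[/eqP hx /eqP hy]]].
- by exists (h * g^-1)%g; rewrite groupM ?groupV //= !permM hx hy !permK !eqxx.
- by exists (h * g)%g; rewrite groupM //= !permM hx hy !eqxx.
Qed.

Lemma arc_edge u v : arc u v -> e u v.
Proof. by case/existsP=> g /andP[gG /andP[/eqP <- /eqP <-]]; rewrite autsG. Qed.

Lemma arc_or_rev u v : e u v -> arc u v || arc v u.
Proof.
move=> euv; have [g gG /eq_set2_cases[][gx gy]] := etransG e_x0y0 euv.
- by apply/orP; left; apply/existsP; exists g; rewrite gG gx gy !eqxx.
- by apply/orP; right; apply/existsP; exists g; rewrite gG gx gy !eqxx.
Qed.

(* An element of G reversing the arc (x0, y0) would make G arc-transitive. *)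
Lemma arc_asym u v : arc u v -> ~~ arc v u.
Proof.
case/existsP=> g1 /andP[g1G /andP[/eqP g1x /eqP g1y]].
apply/negP=> /existsP[g2 /andP[g2G /andP[/eqP g2x /eqP g2y]]].
case: hatG => _ _ _; apply.
have [k kG [kx ky]] : exists2 k, k \in G & k x0 = y0 /\ k y0 = x0.
  exists (g1 * g2^-1)%g; first by rewrite groupM ?groupV.
  by rewrite !permM g1x g1y -g2x -g2y !permK.
have all_arcs p q : e p q -> arc p q.
  case/arc_or_rev/orP=> // /existsP[h /andP[hG /andP[/eqP hx /eqP hy]]].
  by apply/existsP; exists (k * h)%g; rewrite groupM //= !permM kx ky hx hy !eqxx.
move=> x y u' v' /all_arcs/existsP[g /andP[gG /andP[/eqP gx /eqP gy]]].
move=> /all_arcs/existsP[g' /andP[g'G /andP[/eqP g'x /eqP g'y]]].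
exists (g^-1 * g')%g; first by rewrite groupM ?groupV.
by rewrite !permM -gx -gy !permK g'x g'y.
Qed.

Lemma in_orient_base g x y u v : g \in G ->
  in_orient G (g x) (g y) u v = in_orient G x y u v.
Proof.
move=> gG; apply/existsP/existsP => -[h /andP[hG /andP[/eqP hx /eqP hy]]].
- by exists (g * h)%g; rewrite groupM //= !permM hx hy !eqxx.
- by exists (g^-1 * h)%g; rewrite groupM ?groupV //= !permM !permK hx hy !eqxx.
Qed.

Lemma in_orient_sym x y u v : in_orient G x y u v = in_orient G y x v u.
Proof.
by apply/existsP/existsP => -[h /andP[hG /andP[hx hy]]]; exists h; rewrite hG hx hy.
Qed.

Lemma in_orientE x y : e x y ->
  (forall u v, in_orient G x y u v = arc u v) \/
  (forall u v, in_orient G x y u v = arc v u).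
Proof.
case/arc_or_rev/orP=> /existsP[h /andP[hG /andP[/eqP <- /eqP <-]]].
- by left=> u v; rewrite in_orient_base.
- by right=> u v; rewrite in_orient_sym in_orient_base.
Qed.

Lemma arc_set2_act g a b c d : g \in G -> arc a b -> arc c d ->
  [set g a; g b] = [set c; d] -> g a = c /\ g b = d.
Proof.
move=> gG ab cd /eq_set2_cases[//|[ad bc]].
by have := arc_asym cd; rewrite -ad -bc in_orient_act // ab.
Qed.

Definition out_nbrs v := [set w | arc v w].
Definition in_nbrs v := [set w | arc w v].

Lemma out_nbrs_act g v : g \in G -> out_nbrs (g v) = g @: out_nbrs v.
Proof.
move=> gG; apply/setP=> w; rewrite -[w](permKV g) mem_imset; last exact: perm_inj.
by rewrite !inE in_orient_act.
Qed.

Lemma card_out_in v : #|out_nbrs v| + #|in_nbrs v| = 4.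
Proof.
rewrite -(deg4 v) -cardsUI.
have -> : out_nbrs v :&: in_nbrs v = set0.
  by apply/setP=> w; rewrite !inE; apply/negP=> /andP[/arc_asym/negP].
rewrite cards0 addn0; congr #|pred_of_set _|; apply/setP=> w; rewrite !inE.
by apply/idP/idP => [/orP[]/arc_edge|/arc_or_rev //]; rewrite // e_sym.
Qed.

(* Every arc has one tail and one head, so the out- and in-degrees have the same sum over V. *)
Lemma card_out_nbrs v : #|out_nbrs v| = 2.
Proof.
have out_const u : #|out_nbrs u| = #|out_nbrs x0|.
  have [g gG <-] := vtransG x0 u.
  by rewrite out_nbrs_act // card_imset //; exact: perm_inj.
have in_const u : #|in_nbrs u| = 4 - #|out_nbrs x0|.
  by rewrite -(out_const u) -(card_out_in u) addKn.
have sum_out_in : \sum_(u : V) #|out_nbrs u| = \sum_(u : V) #|in_nbrs u|.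
  transitivity (\sum_(u : V) \sum_(w : V) (arc u w : nat)).
    apply: eq_bigr => u _; rewrite /out_nbrs -sum1dep_card big_mkcond.
    by apply: eq_bigr => w _; case: arc.
  rewrite exchange_big; apply: eq_bigr => w _.
  by rewrite /in_nbrs -sum1dep_card [RHS]big_mkcond; apply: eq_bigr => u _; case: arc.
move: sum_out_in; rewrite (eq_bigr _ (fun u _ => out_const u)).
rewrite (eq_bigr _ (fun u _ => in_const u)) !sum_nat_const => /eqP.
have V_gt0 : 0 < #|V| by apply/card_gt0P; exists x0.
by rewrite eqn_mul2l eqn0Ngt V_gt0 out_const => /eqP; lia.
Qed.

Lemma card_in_nbrs v : #|in_nbrs v| = 2.
Proof. by have := card_out_in v; rewrite card_out_nbrs; lia. Qed.

Definition alt_at (s : seq V) v :=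
  (arc (prev s v) v && arc (next s v) v) || (arc v (prev s v) && arc v (next s v)).

Definition alternating (s : seq V) :=
  [&& uniq s, 2 < size s, path.cycle e s & all (alt_at s) s].

Lemma alt_seqE x y s : e x y -> alt_seq e G x y s = alternating s.
Proof.
move=> exy; congr [&& _, _, _ & _]; apply: eq_all => v.
by case: (in_orientE exy) => E; rewrite /alt_at !E // orbC.
Qed.

Lemma alt_cyclesP C :
  reflect (exists2 s, alternating s & cyc_edges s = C) (C \in alt_cycles e G).
Proof.
rewrite inE; apply: (iffP existsP) => [[x /existsP[y /andP[exy]]]|[s alt_s <-]].
  by case/existsP=> k /existsP[t /andP[alt_t /eqP <-]]; exists t; rewrite -?(alt_seqE _ exy).
exists x0; apply/existsP; exists y0; rewrite e_x0y0 /=.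
have s_lt : size s < #|V|.+1.
  by rewrite ltnS -(card_uniqP _); [apply: max_card | case/and4P: alt_s].
apply/existsP; exists (Ordinal s_lt); apply/existsP; exists (in_tuple s).
by rewrite /= (alt_seqE _ e_x0y0) alt_s eqxx.
Qed.

Lemma cyc_edges_alt_cycles s : alternating s -> cyc_edges s \in alt_cycles e G.
Proof. by move=> alt_s; apply/alt_cyclesP; exists s. Qed.

Definition tail (s : seq V) x := arc x (next s x).

Section Alternating.
Variable s : seq V.
Hypothesis alt_s : alternating s.

Lemma alternating_uniq : uniq s. Proof. by case/and4P: alt_s. Qed.
Lemma alternating_size : 2 < size s. Proof. by case/and4P: alt_s. Qed.
Lemma alternating_cycle : path.cycle e s. Proof. by case/and4P: alt_s. Qed.
Lemma alternating_at x : x \in s -> alt_at s x.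
Proof. by case/and4P: alt_s => _ _ _ /allP; apply. Qed.

Lemma alternating_size_gt0 : 0 < size s.
Proof. exact: ltn_trans alternating_size. Qed.

Lemma tail_arcs x : x \in s -> tail s x -> arc x (prev s x) && arc x (next s x).
Proof.
move=> xs tx; case/orP: (alternating_at xs) => /andP[// px nx].
by move: tx; rewrite /tail (negbTE (arc_asym nx)).
Qed.

Lemma head_arcs x : x \in s -> ~~ tail s x -> arc (prev s x) x && arc (next s x) x.
Proof. by move=> xs; case/orP: (alternating_at xs) => /andP[px nx]; rewrite /tail ?px ?nx. Qed.

Lemma out_nbrs_tail x : x \in s -> tail s x -> out_nbrs x = [set prev s x; next s x].
Proof.
move=> xs /(tail_arcs xs)/andP[px nx].
apply: card2_set2; rewrite ?card_out_nbrs ?inE //.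
by rewrite prev_neq_next ?alternating_uniq ?alternating_size.
Qed.

Lemma in_nbrs_head x : x \in s -> ~~ tail s x -> in_nbrs x = [set prev s x; next s x].
Proof.
move=> xs /(head_arcs xs)/andP[px nx].
apply: card2_set2; rewrite ?card_in_nbrs ?inE //.
by rewrite prev_neq_next ?alternating_uniq ?alternating_size.
Qed.

Lemma tail_next x : x \in s -> tail s (next s x) = ~~ tail s x.
Proof.
move=> xs; have ys : next s x \in s by rewrite mem_next.
have px : prev s (next s x) = x by rewrite prev_next // alternating_uniq.
case tx: (tail s x); case ty: (tail s (next s x)) => //=.
  by case/andP: (tail_arcs ys ty); rewrite px => /arc_asym; rewrite -/(tail s x) tx.
by case/andP: (head_arcs ys (negbT ty)); rewrite px => nx; rewrite /tail nx in tx.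
Qed.

Lemma tail_iter_next x i : x \in s -> tail s (iter i (next s) x) = odd i (+) tail s x.
Proof.
move=> xs; elim: i => // i IH.
by rewrite iterS tail_next ?mem_iter_next // IH /=; case: odd; case: tail.
Qed.

End Alternating.

Definition alt_walk (f : nat -> V) := forall i, f i.+2 != f i /\
  ((arc (f i.+1) (f i) && arc (f i.+1) (f i.+2)) ||
   (arc (f i) (f i.+1) && arc (f i.+2) (f i.+1))).

(* Out- and in-degree 2 leave a single way to continue an alternating walk. *)
Lemma alt_walk_eq f g : alt_walk f -> alt_walk g -> f 0 = g 0 -> f 1 = g 1 ->
  forall i, f i = g i.
Proof.
move=> wf wg f0 f1.
suff fg i : f i = g i /\ f i.+1 = g i.+1 by move=> i; case: (fg i).
elim: i => [|i [fgi fgi1]]; split=> //.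
case: (wf i) (wg i) => nf af [ng ag]; rewrite -fgi -fgi1 in ng ag.
case t: (arc (f i.+1) (f i)).
- move: af ag; rewrite t /= (negbTE (arc_asym t)) /= !orbF => af ag.
  by apply: (card2_other (card_out_nbrs (f i.+1)) (a := f i)); rewrite ?inE.
- move: af ag; rewrite t /= => /andP[fi af] /andP[_ ag].
  by apply: (card2_other (card_in_nbrs (f i.+1)) (a := f i)); rewrite ?inE.
Qed.

Lemma alt_walk_next s x : alternating s -> x \in s -> alt_walk (fun i => iter i (next s) x).
Proof.
move=> alt_s xs i; set y := iter i.+1 (next s) x.
have ys : y \in s by apply: mem_iter_next.
have -> : iter i (next s) x = prev s y by rewrite /y iterS prev_next ?alternating_uniq.
split; first by rewrite eq_sym prev_neq_next ?alternating_uniq ?alternating_size.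
by rewrite orbC; apply: alternating_at.
Qed.

Lemma alt_walk_prev s x : alternating s -> x \in s -> alt_walk (fun i => iter i (prev s) x).
Proof.
move=> alt_s xs i; set y := iter i.+1 (prev s) x.
have ys : y \in s by apply: mem_iter_prev.
have -> : iter i (prev s) x = next s y by rewrite /y iterS next_prev ?alternating_uniq.
split; first by rewrite prev_neq_next ?alternating_uniq ?alternating_size.
by have := alternating_at alt_s ys; rewrite /alt_at orbC andbC (andbC (arc (prev s y) _)).
Qed.

Lemma alt_walk_act g f : g \in G -> alt_walk f -> alt_walk (g \o f).
Proof.
move=> gG wf i; case: (wf i) => nf af; split; first by rewrite /= (inj_eq perm_inj).
by rewrite /= !in_orient_act.
Qed.

Lemma alt_walk_shift f k : alt_walk f -> alt_walk (fun i => f (i + k)).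
Proof. by move=> wf i; rewrite !addSn; apply: wf. Qed.

Lemma alternating_map g s : g \in G -> alternating s -> alternating (map g s).
Proof.
move=> gG alt_s; have s_uniq := alternating_uniq alt_s.
rewrite /alternating (map_inj_uniq perm_inj) s_uniq size_map alternating_size //=.
rewrite path.cycle_map (eq_cycle (e' := e)) ?alternating_cycle //; last first.
  by move=> u v /=; rewrite autsG.
rewrite all_map; apply/allP=> x xs /=.
by rewrite /alt_at prev_map ?next_map ?in_orient_act //; try exact: perm_inj; apply: alternating_at.
Qed.

Lemma tail_map g s x : g \in G -> uniq s -> tail (map g s) (g x) = tail s x.
Proof. by move=> gG s_uniq; rewrite /tail next_map ?in_orient_act //; exact: perm_inj. Qed.

(* In an alternating cycle the two edges at [x] both leave [x] or both enter it,
   so either one decides. *)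
Definition cyc_tail (C : {set {set V}}) x := [exists y, ([set x; y] \in C) && arc x y].

Lemma cyc_tailE s x : alternating s -> x \in s -> cyc_tail (cyc_edges s) x = tail s x.
Proof.
move=> alt_s xs; apply/existsP/idP=> [[y /andP[/imsetP[v vs]]]|tx].
  case/eq_set2_cases=> [[<- ->] //|[xv yv]].
  apply: contraLR => /(head_arcs alt_s xs)/andP[px _].
  by rewrite yv -[v](prev_next (alternating_uniq alt_s)) -xv arc_asym.
by exists (next s x); rewrite -/(tail s x) tx andbT; apply: imset_f.
Qed.

Lemma cyc_edges_sub s s' x : alternating s -> alternating s' -> x \in s -> x \in s' ->
  tail s x = tail s' x -> cyc_edges s \subset cyc_edges s'.
Proof.
move=> alt_s alt_s' xs xs' ts; have s'_uniq := alternating_uniq alt_s'.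
have : next s x \in [set prev s' x; next s' x].
  case tx: (tail s x).
    by rewrite -(out_nbrs_tail alt_s' xs') -?ts // inE; case/andP: (tail_arcs alt_s xs tx).
  by rewrite -(in_nbrs_head alt_s' xs') -?ts ?tx // inE; case/andP: (head_arcs alt_s xs (negbT tx)).
move=> nx; apply/subsetP=> f /imsetP[v vs ->].
have [k _ ->] := iter_next_onto (alternating_uniq alt_s) xs vs; rewrite -iterS.
case/set2P: nx => nx.
- have E := alt_walk_eq (alt_walk_next alt_s xs) (alt_walk_prev alt_s' xs') erefl nx.
  rewrite !E /= -[X in [set X; _]](next_prev s'_uniq) setUC.
  by apply: imset_f; rewrite mem_prev mem_iter_prev.
- have E := alt_walk_eq (alt_walk_next alt_s xs) (alt_walk_next alt_s' xs') erefl nx.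
  by rewrite !E /=; apply: imset_f; exact: mem_iter_next.
Qed.

Lemma alt_cycles_act g C : g \in G -> C \in alt_cycles e G -> act_cyc g C \in alt_cycles e G.
Proof.
move=> gG /alt_cyclesP[s alt_s <-].
by rewrite -cyc_edges_map ?alternating_uniq // cyc_edges_alt_cycles ?alternating_map.
Qed.

Lemma cyc_edges_tail_eq s s' x : alternating s -> alternating s' -> x \in s -> x \in s' ->
  tail s x = tail s' x -> cyc_edges s = cyc_edges s'.
Proof.
move=> alt_s alt_s' xs xs' ts; apply/eqP; rewrite eqEsubset.
by rewrite (cyc_edges_sub alt_s alt_s' xs xs' ts) (cyc_edges_sub alt_s' alt_s xs' xs (esym ts)).
Qed.

Local Notation A := (alt_cycles e G).
Implicit Types C D E : {set {set V}}.

Lemma cyc_tail_act g C x : g \in G -> C \in A -> x \in cverts C ->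
  cyc_tail (act_cyc g C) (g x) = cyc_tail C x.
Proof.
move=> gG /alt_cyclesP[s alt_s <-]; rewrite cverts_cyc_edges inE => xs.
have s_uniq := alternating_uniq alt_s.
by rewrite -cyc_edges_map // !cyc_tailE ?tail_map ?alternating_map ?map_f.
Qed.

Lemma alt_cycle_eq C D x : C \in A -> D \in A -> x \in cverts C -> x \in cverts D ->
  cyc_tail C x = cyc_tail D x -> C = D.
Proof.
move=> /alt_cyclesP[s alt_s <-] /alt_cyclesP[s' alt_s' <-].
rewrite !cverts_cyc_edges !inE => xs xs'; rewrite !cyc_tailE //.
exact: cyc_edges_tail_eq.
Qed.

Lemma alt_cycles_at_most_two C D E x : C \in A -> D \in A -> E \in A ->
  x \in cverts C -> x \in cverts D -> x \in cverts E -> [|| C == D, C == E | D == E].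
Proof.
move=> CA DA EA xC xD xE.
case CD: (cyc_tail C x == cyc_tail D x); first by rewrite (alt_cycle_eq CA DA xC xD (eqP CD)) eqxx.
case CE: (cyc_tail C x == cyc_tail E x).
  by rewrite (alt_cycle_eq CA EA xC xE (eqP CE)) eqxx orbT.
rewrite (alt_cycle_eq DA EA xD xE) ?eqxx ?orbT //.
by move: CD CE; case: (cyc_tail C x); case: (cyc_tail D x); case: (cyc_tail E x).
Qed.

Lemma exists_tail s b : alternating s -> exists2 y, y \in s & tail s y = b.
Proof.
case: s => [|z s] alt_s; first by have := alternating_size alt_s.
case tz: (tail (z :: s) z == b); first by exists z; rewrite ?mem_head ?(eqP tz).
exists (next (z :: s) z); first by rewrite mem_next mem_head.
by rewrite tail_next ?mem_head //; move: tz; case: b; case: tail.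
Qed.

Lemma alternating_size_even s : alternating s -> ~~ odd (size s).
Proof.
move=> alt_s; have [x xs tx] := exists_tail true alt_s.
have := tail_iter_next alt_s (size s) xs.
by rewrite iter_next_size ?alternating_uniq // tx addbT => <-.
Qed.

Lemma exists_cyc_tail C b : C \in A -> exists2 y, y \in cverts C & cyc_tail C y = b.
Proof.
case/alt_cyclesP=> s alt_s <-; have [y ys ty] := exists_tail b alt_s.
by exists y; rewrite ?cverts_cyc_edges ?inE ?cyc_tailE.
Qed.

Lemma alt_cycles_vtrans C D : C \in A -> D \in A -> exists2 g, g \in G & act_cyc g C = D.
Proof.
move=> CA DA; have [x xC tx] := exists_cyc_tail true CA.
have [y yD ty] := exists_cyc_tail true DA.
have [g gG gx] := vtransG x y; exists g => //.
apply: (alt_cycle_eq (x := y)) => //; first exact: alt_cycles_act.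
  by rewrite cverts_act_cyc -gx imset_f.
by rewrite -[in LHS]gx cyc_tail_act // tx ty.
Qed.

Lemma exists_alt_cycle_at C x b : C \in A ->
  exists2 D, D \in A & (x \in cverts D) && (cyc_tail D x == b).
Proof.
move=> CA; have [y yC ty] := exists_cyc_tail b CA.
have [g gG gy] := vtransG y x.
exists (act_cyc g C); first exact: alt_cycles_act.
by rewrite -gy cyc_tail_act // ty eqxx cverts_act_cyc imset_f.
Qed.

Lemma cyc_tail_adj C D x : C \in A -> D \in A -> alt_adj C D ->
  x \in cverts C -> x \in cverts D -> cyc_tail D x = ~~ cyc_tail C x.
Proof.
move=> CA DA /andP[CD _] xC xD.
have : cyc_tail D x != cyc_tail C x.
  by apply: contra CD => /eqP tDC; rewrite (alt_cycle_eq CA DA xC xD (esym tDC)).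
by case: (cyc_tail D x); case: (cyc_tail C x).
Qed.

Definition partner C x := odflt C [pick D in A | alt_adj C D && (x \in cverts D)].

Lemma partnerP C x : C \in A -> x \in cverts C ->
  [/\ partner C x \in A, alt_adj C (partner C x), x \in cverts (partner C x) &
      cyc_tail (partner C x) x = ~~ cyc_tail C x].
Proof.
move=> CA xC; have [D DA /andP[xD /eqP tD]] := exists_alt_cycle_at x (~~ cyc_tail C x) CA.
have CD : alt_adj C D.
  apply/andP; split; last by apply/set0Pn; exists x; rewrite inE xC.
  by apply: contraPneq tD => <-; case: cyc_tail.
rewrite /partner; case: pickP => [D' /andP[D'A /andP[CD' xD']]|/(_ D)].
  by split=> //; apply: cyc_tail_adj.
by rewrite DA CD xD.
Qed.

Lemma partner_eq C D x : C \in A -> D \in A -> alt_adj C D ->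
  x \in cverts C -> x \in cverts D -> D = partner C x.
Proof.
move=> CA DA CD xC xD; have [PA _ xP tP] := partnerP CA xC.
by apply: (alt_cycle_eq DA PA xD xP); rewrite tP (cyc_tail_adj CA DA CD xC xD).
Qed.

Lemma partner_act g C x : g \in G -> C \in A -> act_cyc g C = C -> x \in cverts C ->
  partner C (g x) = act_cyc g (partner C x).
Proof.
move=> gG CA gC xC; have [PA CP xP _] := partnerP CA xC.
symmetry; apply: partner_eq => //; first exact: alt_cycles_act.
- by rewrite -{1}gC alt_adj_act.
- by rewrite -gC cverts_act_cyc imset_f.
- by rewrite cverts_act_cyc imset_f.
Qed.

Lemma alt_adj_meet C D : alt_adj C D -> exists x, (x \in cverts C) && (x \in cverts D).
Proof. by case/andP=> _ /set0Pn[x]; rewrite inE; exists x. Qed.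

Lemma alt_cycles_etrans C D C' D' : C \in A -> D \in A -> C' \in A -> D' \in A ->
  alt_adj C D -> alt_adj C' D' ->
  exists2 g, g \in G & [set act_cyc g C; act_cyc g D] = [set C'; D'].
Proof.
move=> CA DA C'A D'A CD C'D'.
have [x /andP[xC xD]] := alt_adj_meet CD; have [y /andP[yC' yD']] := alt_adj_meet C'D'.
have [g gG gx] := vtransG x y; exists g => //.
have gCA := alt_cycles_act gG CA; have gDA := alt_cycles_act gG DA.
have ygC : y \in cverts (act_cyc g C) by rewrite cverts_act_cyc -gx imset_f.
have ygD : y \in cverts (act_cyc g D) by rewrite cverts_act_cyc -gx imset_f.
have gCD : act_cyc g C != act_cyc g D by rewrite (inj_eq (act_cyc_inj (g := g))); case/andP: CD.
have /negbTE C'D'_neq : C' != D' by case/andP: C'D'.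
have := alt_cycles_at_most_two gCA C'A D'A ygC yC' yD'.
have := alt_cycles_at_most_two gDA C'A D'A ygD yC' yD'.
rewrite C'D'_neq !orbF => /orP[]/eqP gD /orP[]/eqP gC; rewrite gC gD //.
- by move: gCD; rewrite gC gD eqxx.
- exact: setUC.
- by move: gCD; rewrite gC gD eqxx.
Qed.

Definition alt_arc_transitive : Prop :=
  forall C D C' D', C \in A -> D \in A -> C' \in A -> D' \in A ->
    alt_adj C D -> alt_adj C' D' ->
    exists2 g, g \in G & (act_cyc g C = C' /\ act_cyc g D = D').

(* By edge-transitivity, one swapped edge of Alt_G conjugates to a swap of any edge. *)
Lemma alt_arc_transitive_swap C D t : C \in A -> D \in A -> alt_adj C D ->
  t \in G -> act_cyc t C = D -> act_cyc t D = C -> alt_arc_transitive.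
Proof.
move=> CA DA CD tG tC tD C1 D1 C' D' C1A D1A C'A D'A C1D1 C'D'.
have [g gG /eq_set2_cases[[gC1 gD1]|[gC1 gD1]]] := alt_cycles_etrans C1A D1A C'A D'A C1D1 C'D'.
  by exists g.
have [k kG /eq_set2_cases[][kC' kD']] := alt_cycles_etrans C'A D'A CA DA C'D' CD;
  exists (g * (k * t * k^-1))%g; rewrite ?groupM ?groupV //;
  by rewrite !act_cycM gC1 gD1 kC' kD' tC tD (act_cycK kC') (act_cycK kD').
Qed.

Section Positions.
Variables (s : seq V) (v0 : V).
Hypotheses (alt_s : alternating s) (v0s : v0 \in s) (tail_v0 : tail s v0).

Local Notation n := (size s).
Local Notation C := (cyc_edges s).

Definition pos i := iter i (next s) v0.

Let s_uniq := alternating_uniq alt_s.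

Lemma mem_pos i : pos i \in s. Proof. exact: mem_iter_next. Qed.

Lemma pos_cverts i : pos i \in cverts C.
Proof. by rewrite cverts_cyc_edges inE mem_pos. Qed.

Lemma posS i : pos i.+1 = next s (pos i). Proof. exact: iterS. Qed.

Lemma pos_periodic i : pos (i + n) = pos i.
Proof. by rewrite /pos iterD iter_next_size. Qed.

Lemma tail_pos i : tail s (pos i) = ~~ odd i.
Proof. by rewrite tail_iter_next // tail_v0 addbT. Qed.

Let CA : C \in A := cyc_edges_alt_cycles alt_s.

Lemma cyc_tail_pos i : cyc_tail C (pos i) = ~~ odd i.
Proof. by rewrite cyc_tailE ?mem_pos ?tail_pos. Qed.

Lemma act_cyc_fix g i j : g \in G -> g (pos i) = pos j -> odd i = odd j -> act_cyc g C = C.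
Proof.
move=> gG gij ij; apply: (alt_cycle_eq (x := pos j)); rewrite ?CA //.
- exact: alt_cycles_act CA.
- by rewrite cverts_act_cyc -gij imset_f ?pos_cverts.
- exact: pos_cverts.
- by rewrite -[in LHS]gij cyc_tail_act ?CA ?pos_cverts // !cyc_tail_pos ij.
Qed.

Lemma exists_rotation2 : exists2 g, g \in G & forall i, g (pos i) = pos i.+2.
Proof.
have a01 : arc (pos 0) (pos 1) by have := tail_pos 0; rewrite /tail -posS.
have a23 : arc (pos 2) (pos 3) by have := tail_pos 2; rewrite /tail -posS.
have [g gG /(arc_set2_act gG a01 a23)[g0 g1]] := etransG (arc_edge a01) (arc_edge a23).
exists g => // i; rewrite -addn2.
exact: (alt_walk_eq (alt_walk_act gG (alt_walk_next alt_s v0s))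
                    (alt_walk_shift 2 (alt_walk_next alt_s v0s)) g0 g1).
Qed.

Lemma exists_reflection c : odd c ->
  exists2 g, g \in G & g (pos c) = pos c /\ g (pos (c + c)) = pos 0.
Proof.
case: c => // c oc.
have prev_c : prev s (pos c.+1) = pos c by rewrite posS prev_next.
have : ~~ tail s (pos c.+1) by rewrite tail_pos oc.
move/(head_arcs alt_s (mem_pos _)); rewrite prev_c -posS => /andP[a1 a2].
have [g gG /(arc_set2_act gG a2 a1)[g2 g1]] := etransG (arc_edge a2) (arc_edge a1).
exists g => //; split=> //.
have E := alt_walk_eq (alt_walk_act gG (alt_walk_shift c.+1 (alt_walk_next alt_s v0s)))
  (alt_walk_prev alt_s (mem_pos c.+1)).
have back : iter c.+1 (prev s) (pos c.+1) = pos 0 := iter_prev_next s_uniq _ _.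
have := E _ _ c.+1; rewrite back; apply.
- exact: g1.
- by rewrite /= prev_c; exact: g2.
Qed.

Lemma partner_pos_multiples : exists2 q, 0 < q &
  q %| n /\ forall i, (partner C (pos i) == partner C (pos 0)) = (q %| i).
Proof.
have [rho rhoG rho_pos] := exists_rotation2.
have rhoC : act_cyc rho C = C := act_cyc_fix rhoG (rho_pos 0) erefl.
apply: (@eq_f0_multiples _ (fun i => partner C (pos i)) (act_cyc rho) n
  (alternating_size_gt0 alt_s) (alternating_size_even alt_s)).
- by move=> i; rewrite pos_periodic.
- by move=> i; rewrite -rho_pos partner_act ?CA ?pos_cverts.
- move=> c oc Pc; have [sg sgG [sg_c sg_cc]] := exists_reflection oc.
  have sgC : act_cyc sg C = C := act_cyc_fix sgG sg_c erefl.
  apply: (@act_cyc_inj _ sg).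
  by rewrite -Pc -!partner_act ?CA ?pos_cverts // sg_cc sg_c.
Qed.

Section Multiples.
Variable q : nat.
Hypotheses (q_gt0 : 0 < q) (q_dvd : q %| n).
Hypothesis partner_pos : forall i, (partner C (pos i) == partner C (pos 0)) = (q %| i).

Local Notation D := (partner C (pos 0)).

Lemma cverts_partner_pos0 :
  cverts C :&: cverts D = [set pos i | i : 'I_n in [set i : 'I_n | q %| i]].
Proof.
have [DA CD _ _] := partnerP CA (pos_cverts 0).
apply/setP=> x; rewrite inE; apply/andP/imsetP=> [[xC xD]|[i]].
  have xs : x \in s by rewrite cverts_cyc_edges inE in xC.
  have [k k_lt x_k] : exists2 k, k < n & x = pos k := iter_next_onto s_uniq v0s xs.
  exists (Ordinal k_lt) => //.
  by rewrite inE -partner_pos /= -x_k -(partner_eq CA DA CD xC xD).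
rewrite inE -partner_pos => /eqP Pi ->; split; first exact: pos_cverts.
by have [_ _ + _] := partnerP CA (pos_cverts i); rewrite Pi.
Qed.

Lemma card_cverts_partner_pos0 : #|cverts C :&: cverts D| = n %/ q.
Proof.
rewrite cverts_partner_pos0 card_in_imset ?card_multiples // => i j _ _.
by move/(iter_next_inj s_uniq v0s (ltn_ord i) (ltn_ord j))/val_inj.
Qed.

Lemma partner_pos_dvd x : x \in cverts C -> x \in cverts D ->
  exists2 k, x = pos k & q %| k.
Proof.
move=> xC xD; have : x \in cverts C :&: cverts D by rewrite inE xC xD.
by rewrite cverts_partner_pos0 => /imsetP[i]; rewrite inE => qi ->; exists i.
Qed.

(* Swapping [C] and [D] must move [pos 0], a tail of [C], to a common vertex that is a
   head of [C]: an odd position, which is a multiple of [q]. *)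
Lemma alt_arc_transitive_odd : alt_arc_transitive <-> odd q.
Proof.
have [DA CD v0D tD] := partnerP CA (pos_cverts 0).
rewrite cyc_tail_pos in tD.
split=> [arc_tr|oq].
  have DC : alt_adj D C by rewrite alt_adj_sym.
  have [t tG [tC tD']] := arc_tr _ _ _ _ CA DA DA CA CD DC.
  have xC : t (pos 0) \in cverts C by rewrite -tD' cverts_act_cyc imset_f.
  have xD : t (pos 0) \in cverts D by rewrite -tC cverts_act_cyc imset_f ?pos_cverts.
  have [k x_k qk] := partner_pos_dvd xC xD.
  have : cyc_tail C (t (pos 0)) = false by rewrite -{1}tD' cyc_tail_act.
  rewrite x_k cyc_tail_pos => /negbFE ok.
  by apply: contraLR ok; rewrite -!dvdn2 => /dvdn_trans; apply.
have [PA _ qP tP] := partnerP CA (pos_cverts q).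
have /eqP Pq : partner C (pos q) == D by rewrite partner_pos.
rewrite Pq cyc_tail_pos oq in qP tP.
have [t tG tq] := vtransG (pos 0) (pos q).
have qtC : pos q \in cverts (act_cyc t C) by rewrite cverts_act_cyc -tq imset_f ?pos_cverts.
have qtD : pos q \in cverts (act_cyc t D) by rewrite cverts_act_cyc -tq imset_f.
apply: (alt_arc_transitive_swap CA DA CD tG).
  apply: (alt_cycle_eq (alt_cycles_act tG CA) DA qtC qP).
  by rewrite tP -[in LHS]tq cyc_tail_act ?CA ?pos_cverts // cyc_tail_pos.
apply: (alt_cycle_eq (alt_cycles_act tG DA) CA qtD (pos_cverts q)).
by rewrite cyc_tail_pos oq -[in LHS]tq cyc_tail_act // tD.
Qed.

End Multiples.
End Positions.

Lemma card_alt_cycle C : C \in A -> #|C| = #|cverts C|.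
Proof.
case/alt_cyclesP=> s alt_s <-; have s_uniq := alternating_uniq alt_s.
rewrite card_cyc_edges ?alternating_size // cverts_cyc_edges.
by rewrite -(card_uniqP s_uniq); apply: eq_card => x; rewrite inE.
Qed.

Lemma card_alt_cycles_eq C D : C \in A -> D \in A -> #|C| = #|D|.
Proof. by move=> CA DA; have [g _ <-] := alt_cycles_vtrans CA DA; rewrite card_act_cyc. Qed.

Lemma radG_card C : C \in A -> 2 * radG e G = #|C|.
Proof.
move=> CA; rewrite /radG; case: pickP => [C0 C0A|/(_ C)]; last by rewrite CA.
rewrite (card_alt_cycles_eq CA C0A).
case/alt_cyclesP: C0A => s alt_s <-.
rewrite card_cyc_edges ?alternating_uniq ?alternating_size //.
by rewrite divn2 mul2n (even_halfK (alternating_size_even alt_s)).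
Qed.

Lemma attG_card C D : C \in A -> D \in A -> alt_adj C D ->
  attG e G = #|cverts C :&: cverts D|.
Proof.
move=> CA DA CD; rewrite /attG; case: pickP => [[C' D'] /and3P[/= C'A D'A C'D']|/(_ (C, D))].
  have [g gG gCD] := alt_cycles_etrans C'A D'A CA DA C'D' CD.
  rewrite -(card_imset _ (@perm_inj _ g)) imsetI; last by move=> u v _ _; apply: perm_inj.
  by rewrite -!cverts_act_cyc; case/eq_set2_cases: gCD => -[-> ->] //; rewrite setIC.
by rewrite /= CA DA CD.
Qed.

(* Each vertex of [C] lies on exactly one neighbour of [C] in Alt_G, and each
   neighbour meets [C] in attG vertices. *)
Lemma card_adj_mul_attG C : C \in A -> #|[set D in A | alt_adj C D]| * attG e G = #|C|.
Proof.
move=> CA; rewrite (card_alt_cycle CA) -[#|cverts C|]sum1_card -sum_nat_const.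
transitivity (\sum_(D in [set D in A | alt_adj C D])
                \sum_(x in cverts C) (if x \in cverts D then 1 else 0)).
  apply: eq_bigr => D; rewrite inE => /andP[DA CD].
  rewrite (attG_card CA DA CD) -sum1_card -big_mkcondr.
  by apply: eq_bigl => x; rewrite inE.
rewrite exchange_big; apply: eq_bigr => x xC.
have [PA CP xP _] := partnerP CA xC.
rewrite (bigD1 (partner C x)) /=; last by rewrite inE PA CP.
rewrite xP big1 // => D /andP[]; rewrite inE => /andP[DA CD].
by case: ifP => // xD; rewrite -(partner_eq CA DA CD xC xD) eqxx.
Qed.

Lemma attG_gt0 C : C \in A -> 0 < attG e G.
Proof.
move=> CA; have [x xC _] := exists_cyc_tail true CA.
have [PA CP xP _] := partnerP CA xC.
by rewrite (attG_card CA PA CP); apply/card_gt0P; exists x; rewrite inE xC.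
Qed.

Lemma card_alt_adj C : C \in A ->
  #|[set D in A | alt_adj C D]| = (2 * radG e G) %/ attG e G.
Proof. by move=> CA; rewrite (radG_card CA) -(card_adj_mul_attG CA) mulnK ?(attG_gt0 CA). Qed.

Lemma alt_arc_transitive_attG C : C \in A -> alt_arc_transitive <-> ~~ (attG e G %| radG e G).
Proof.
case/alt_cyclesP=> s alt_s _; have [v0 v0s tv0] := exists_tail true alt_s.
have CA := cyc_edges_alt_cycles alt_s.
have [q q_gt0 [q_dvd partner_pos]] := partner_pos_multiples alt_s v0s tv0.
have [DA CD _ _] := partnerP CA (pos_cverts v0s 0).
rewrite (attG_card CA DA CD) (card_cverts_partner_pos0 alt_s v0s q_gt0 q_dvd partner_pos).
have -> : radG e G = size s %/ 2.
  rewrite -(card_cyc_edges (alternating_uniq alt_s) (alternating_size alt_s)).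
  by rewrite -(radG_card CA) mulKn.
rewrite dvdn_divn_half ?alternating_size_gt0 ?alternating_size_even // negbK.
exact: (alt_arc_transitive_odd alt_s v0s tv0 partner_pos).
Qed.

End HalfArcTransitive.

Theorem proposition2p1 (V : finType) (e : rel V) (G : {group {perm V}}) :
  symmetric e -> irreflexive e ->
  (forall x, #|[set y | e x y]| = 4) ->
  (forall x y, connect e x y) ->
  half_arc_transitive e G ->
  2 < #|alt_cycles e G| ->
  let r := radG e G in
  let a := attG e G in
  let A := alt_cycles e G in
  [/\ (forall C, C \in A -> #|[set D in A | alt_adj C D]| = (2 * r) %/ a),
      (forall C D, C \in A -> D \in A ->
         exists2 g, g \in G & act_cyc g C = D),
      (forall C D C' D', C \in A -> D \in A -> C' \in A -> D' \in A ->
         alt_adj C D -> alt_adj C' D' ->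
         exists2 g, g \in G & [set act_cyc g C; act_cyc g D] = [set C'; D']) &
      ((forall C D C' D', C \in A -> D \in A -> C' \in A -> D' \in A ->
         alt_adj C D -> alt_adj C' D' ->
         exists2 g, g \in G & (act_cyc g C = C' /\ act_cyc g D = D'))
       <-> ~~ (a %| r))].
Proof.
move=> e_sym _ deg4 _ hatG A_gt2 r a A.
have [C0 C0A] : exists C, C \in A by apply/card_gt0P; apply: leq_trans A_gt2.
have [x0 [y0 e_x0y0]] : exists x y, e x y.
  by move: C0A; rewrite inE => /existsP[x /existsP[y /andP[exy _]]]; exists x, y.
split.
- by move=> C CA; exact: (card_alt_adj e_sym deg4 hatG e_x0y0 CA).
- by move=> C D CA DA; exact: (alt_cycles_vtrans e_sym deg4 hatG e_x0y0 CA DA).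
- move=> C D C' D' CA DA C'A D'A.
  exact: (alt_cycles_etrans e_sym deg4 hatG e_x0y0 CA DA C'A D'A).
- exact: (alt_arc_transitive_attG e_sym deg4 hatG e_x0y0 C0A).
Qed.
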